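(* Fix $A>0$. For integers $n\ge 3$ with $(n-2)\pi>A$, let $\mathcal{Q}_n$ be the regular $n$-gon in $\mathbb{H}^2$ of area $A$. Then the perimeter $P(\mathcal{Q}_n)$ is strictly decreasing in $n$; that is, $P(\mathcal{Q}_{n+1})<P(\mathcal{Q}_n)$ whenever both polygons exist. *)

From Stdlib Require Import Reals.
Open Scope R_scope.

Definition arcosh (y : R) : R := ln (y + sqrt (y * y - 1)).

(* The regular n-gon Q_n of area A in the hyperbolic plane H^2
   (curvature -1).
   Its interior angle alpha is fixed by Gauss-Bonnet:
     A = (n-2) pi - n alpha. *)
Definition reg_angle (n : nat) (A : R) : R := ((INR n - 2) * PI - A) / INR n.

(* Side length s of Q_n: in the right triangle (center, side midpoint,
   vertex) with angles pi/n at the center and alpha/2 at the vertex,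
   hyperbolic trigonometry gives cos(pi/n) = cosh(s/2) sin(alpha/2). *)
Definition reg_side (n : nat) (A : R) : R :=
  2 * arcosh (cos (PI / INR n) / sin (reg_angle n A / 2)).

Definition reg_perimeter (n : nat) (A : R) : R := INR n * reg_side n A.

(* Write [t = 1/n] and [c = pi + A/2].  Gauss-Bonnet and the right-triangle
   relation give [cosh (s/2) = cos (pi t) / cos (c t)] for the side [s] of Q_n,
   so [ln cosh (s/2) = F t] with [F t = ln cos (pi t) - ln cos (c t)], and the
   perimeter is [2 (s/2) / t].  Both [ln cosh] and [-F] vanish to second order at
   0 and have a third derivative of constant sign, so [F t / t^2] increases while
   [ln cosh w / w^2] decreases; together with the monotonicity of [cosh] this
   forces [(s/2) / t] to increase with [t], i.e. the perimeter to decrease in n. *)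

From Coquelicot Require Import Coquelicot.
From Stdlib Require Import Reals Lra Lia.
Open Scope R_scope.

Lemma lt_of_is_derive_pos (f f' : R -> R) (a b : R) : a < b ->
  (forall x, a <= x <= b -> is_derive f x (f' x)) ->
  (forall x, a < x < b -> 0 < f' x) -> f a < f b.
Proof.
intros hab df hpos.
destruct (MVT_cor2 f f' a b hab) as [x [e hx]].
- intros x hx; apply is_derive_Reals; auto.
- specialize (hpos x hx). nra.
Qed.

Lemma pos_of_is_derive_pos (g g' : R -> R) (T : R) : g 0 = 0 ->
  (forall t, 0 <= t <= T -> is_derive g t (g' t)) ->
  (forall t, 0 < t < T -> 0 < g' t) ->
  forall t, 0 < t <= T -> 0 < g t.
Proof.
intros g0 dg hpos t ht. rewrite <- g0.
apply (lt_of_is_derive_pos g g'); try lra.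
- intros x hx; apply dg; lra.
- intros x hx; apply hpos; lra.
Qed.

Section DivSqrIncreasing.

Variables (f f1 f2 f3 : R -> R) (T : R).
Hypothesis f_0 : f 0 = 0.
Hypothesis f1_0 : f1 0 = 0.
Hypothesis df : forall t, 0 <= t <= T -> is_derive f t (f1 t).
Hypothesis df1 : forall t, 0 <= t <= T -> is_derive f1 t (f2 t).
Hypothesis df2 : forall t, 0 <= t <= T -> is_derive f2 t (f3 t).
Hypothesis f3_pos : forall t, 0 < t < T -> 0 < f3 t.

(* [t f'' - f'] and [t f' - 2 f] vanish at 0, and the derivative of each is
   [t f'''] and the other one respectively; the second is [t^3 (f / t^2)']. *)
Lemma div_sqr_increasing t1 t2 : 0 < t1 < t2 -> t2 <= T ->
  f t1 / t1 ^ 2 < f t2 / t2 ^ 2.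
Proof.
intros ht hT.
assert (hJ : forall t, 0 < t <= T -> 0 < t * f2 t - f1 t).
{ apply (pos_of_is_derive_pos _ (fun t => t * f3 t)).
  - rewrite f1_0; ring.
  - intros t h. evar_last.
    + apply (is_derive_minus (fun t => t * f2 t) f1);
        [apply (is_derive_mult (fun t => t) f2);
           [apply is_derive_id | apply df2, h | apply Rmult_comm]
        | apply df1, h].
    + unfold minus, plus, opp, mult, one; simpl; ring.
  - intros t h. apply Rmult_lt_0_compat; [lra | apply f3_pos, h]. }
assert (hH : forall t, 0 < t <= T -> 0 < t * f1 t - 2 * f t).
{ apply (pos_of_is_derive_pos _ (fun t => t * f2 t - f1 t)).
  - rewrite f_0, f1_0; ring.
  - intros t h. evar_last.
    + apply (is_derive_minus (fun t => t * f1 t) (fun t => 2 * f t));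
        [apply (is_derive_mult (fun t => t) f1);
           [apply is_derive_id | apply df1, h | apply Rmult_comm]
        | apply is_derive_scal, df, h].
    + unfold minus, plus, opp, mult, one; simpl; ring.
  - intros t h. apply hJ; lra. }
apply (lt_of_is_derive_pos (fun t => f t / t ^ 2)
         (fun t => (t * f1 t - 2 * f t) / t ^ 3)); [lra | |].
- intros t h. evar_last.
  + apply is_derive_div; [apply df; lra | apply is_derive_pow, is_derive_id |].
    apply pow_nonzero; lra.
  + unfold one; simpl; field; lra.
- intros t h. apply Rdiv_lt_0_compat; [apply hH; lra | apply pow_lt; lra].
Qed.

End DivSqrIncreasing.

Lemma cube_lt x y : 0 <= x < y -> x ^ 3 < y ^ 3.
Proof.
intros h. assert (x * x < y * y) by nra.
simpl. rewrite !Rmult_1_r. nra.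
Qed.

Lemma sin_div_cos_cube_lt a b : 0 < a < b -> b < PI / 2 ->
  sin a / cos a ^ 3 < sin b / cos b ^ 3.
Proof.
intros hab hb.
assert (hsa : 0 < sin a) by (apply sin_gt_0; lra).
assert (hsab : sin a < sin b) by (apply sin_increasing_1; lra).
assert (hcb : 0 < cos b) by (apply cos_gt_0; lra).
assert (hcab : cos b < cos a) by (apply cos_decreasing_1; lra).
assert (hcab3 : cos b ^ 3 < cos a ^ 3) by (apply cube_lt; lra).
assert (0 < cos b ^ 3) by (apply pow_lt; lra).
apply Rlt_trans with (sin b / cos a ^ 3).
- apply Rmult_lt_compat_r; [apply Rinv_0_lt_compat; lra | exact hsab].
- apply Rmult_lt_compat_l; [lra | apply Rinv_lt_contravar; nra].
Qed.

Lemma pow3_mul_sin_div_cos_cube_lt p c t : 0 < p < c -> 0 < t -> c * t < PI / 2 ->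
  p ^ 3 * sin (p * t) / cos (p * t) ^ 3 < c ^ 3 * sin (c * t) / cos (c * t) ^ 3.
Proof.
intros hpc ht hct.
assert (hpt : 0 < p * t < c * t) by (split; nra).
assert (0 < sin (p * t) / cos (p * t) ^ 3).
{ apply Rdiv_lt_0_compat; [apply sin_gt_0 | apply pow_lt, cos_gt_0]; lra. }
assert (p ^ 3 < c ^ 3) by (apply cube_lt; lra).
pose proof (sin_div_cos_cube_lt (p * t) (c * t) hpt hct).
unfold Rdiv in *. rewrite !Rmult_assoc.
apply Rmult_le_0_lt_compat; lra || (apply pow_le; lra).
Qed.

Lemma ln_cos_diff_div_sqr_increasing p c t1 t2 :
  0 < p < c -> 0 < t1 < t2 -> c * t2 < PI / 2 ->
  (ln (cos (p * t1)) - ln (cos (c * t1))) / t1 ^ 2 <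
  (ln (cos (p * t2)) - ln (cos (c * t2))) / t2 ^ 2.
Proof.
intros hpc ht hct.
pose proof PI_RGT_0.
assert (hcos : forall t, 0 <= t <= t2 -> 0 < cos (c * t) /\ 0 < cos (p * t)).
{ intros t h. split; apply cos_gt_0; nra. }
apply (div_sqr_increasing
  (fun t => ln (cos (p * t)) - ln (cos (c * t)))
  (fun t => c * sin (c * t) / cos (c * t) - p * sin (p * t) / cos (p * t))
  (fun t => c ^ 2 / cos (c * t) ^ 2 - p ^ 2 / cos (p * t) ^ 2)
  (fun t => 2 * c ^ 3 * sin (c * t) / cos (c * t) ^ 3
          - 2 * p ^ 3 * sin (p * t) / cos (p * t) ^ 3) t2); try lra.
- rewrite !Rmult_0_r, cos_0, ln_1; ring.
- rewrite !Rmult_0_r, sin_0, cos_0; field.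
- intros t h. destruct (hcos t h).
  auto_derive; [repeat split; lra | field; lra].
- intros t h. destruct (hcos t h).
  (* With [1] written as [sin^2 + cos^2], the derivative is a field identity. *)
  pose proof (sin2_cos2 (c * t)) as ec. pose proof (sin2_cos2 (p * t)) as ep.
  unfold Rsqr in ec, ep.
  replace (c ^ 2 / cos (c * t) ^ 2) with
    (c ^ 2 * (sin (c * t) * sin (c * t) + cos (c * t) * cos (c * t)) / cos (c * t) ^ 2)
    by (rewrite ec, Rmult_1_r; reflexivity).
  replace (p ^ 2 / cos (p * t) ^ 2) with
    (p ^ 2 * (sin (p * t) * sin (p * t) + cos (p * t) * cos (p * t)) / cos (p * t) ^ 2)
    by (rewrite ep, Rmult_1_r; reflexivity).
  auto_derive; [repeat split; lra | field; lra].
- intros t h. destruct (hcos t h).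
  auto_derive; [repeat split; intro; nra | field; lra].
- intros t h.
  pose proof (pow3_mul_sin_div_cos_cube_lt p c t hpc ltac:(lra) ltac:(nra)).
  unfold Rdiv in *. lra.
Qed.

Lemma cosh_pos w : 0 < cosh w.
Proof. unfold cosh. pose proof (exp_pos w). pose proof (exp_pos (- w)). lra. Qed.

Lemma sinh_pos w : 0 < w -> 0 < sinh w.
Proof. intro h. rewrite <- sinh_0. apply sinh_lt, h. Qed.

Lemma cosh_lt a b : 0 <= a < b -> cosh a < cosh b.
Proof.
intro h. apply (lt_of_is_derive_pos cosh sinh); [lra | |].
- intros x _. apply is_derive_Reals, derivable_pt_lim_cosh.
- intros x hx. apply sinh_pos; lra.
Qed.

Lemma ln_cosh_div_sqr_decreasing w1 w2 : 0 < w1 < w2 ->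
  ln (cosh w2) / w2 ^ 2 < ln (cosh w1) / w1 ^ 2.
Proof.
intro hw.
assert (h := div_sqr_increasing
  (fun w => - ln (cosh w)) (fun w => - (sinh w / cosh w))
  (fun w => - / cosh w ^ 2) (fun w => 2 * sinh w / cosh w ^ 3) w2).
cbv beta in h. unfold Rdiv in *.
enough (- ln (cosh w1) * / w1 ^ 2 < - ln (cosh w2) * / w2 ^ 2) by lra.
apply h; try lra.
- rewrite cosh_0, ln_1; ring.
- rewrite sinh_0; ring.
- intros w _. pose proof (cosh_pos w). unfold cosh, sinh in *.
  auto_derive; [lra | field; lra].
- intros w _. pose proof (cosh_pos w). pose proof (exp_pos w).
  unfold cosh, sinh in *.
  auto_derive; [repeat split; lra |].
  rewrite !exp_Ropp. field. split; nra.
- intros w _. pose proof (cosh_pos w). unfold cosh, sinh in *.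
  auto_derive; [repeat split; intro; nra | field; lra].
- intros w hw'. apply Rmult_lt_0_compat.
  + pose proof (sinh_pos w). lra.
  + apply Rinv_0_lt_compat, pow_lt, cosh_pos.
Qed.

Lemma div_lt_of_ln_cosh_div_sqr_lt t1 t2 u1 u2 : 0 < t1 < t2 -> 0 < u2 ->
  ln (cosh u1) / t1 ^ 2 < ln (cosh u2) / t2 ^ 2 -> u1 / t1 < u2 / t2.
Proof.
intros ht hu2 hlt.
destruct (Rlt_or_le (u1 / t1) (u2 / t2)) as [|hge]; [assumption | exfalso].
(* [w] is the value [u1] would have if [u / t] were constant. *)
set (w := u2 * t1 / t2).
assert (hw : 0 < w < u2).
{ unfold w. split; [apply Rdiv_lt_0_compat; nra |].
  apply Rmult_lt_reg_r with t2; [lra |]. field_simplify; nra. }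
assert (hwu1 : w <= u1).
{ unfold w. apply Rmult_le_reg_r with (/ t1); [apply Rinv_0_lt_compat; lra |].
  replace (u2 * t1 / t2 * / t1) with (u2 / t2) by (field; lra). exact hge. }
assert (hcosh : ln (cosh w) <= ln (cosh u1)).
{ apply ln_le; [apply cosh_pos |].
  destruct hwu1 as [hlt' | ->]; [left; apply cosh_lt; lra | right; reflexivity]. }
assert (hdec := ln_cosh_div_sqr_decreasing w u2 hw).
assert (hk : 0 < (u2 / t2) ^ 2) by (apply pow_lt, Rdiv_lt_0_compat; lra).
assert (e2 : ln (cosh u2) / t2 ^ 2 = ln (cosh u2) / u2 ^ 2 * (u2 / t2) ^ 2)
  by (field; lra).
assert (ew : ln (cosh w) / t1 ^ 2 = ln (cosh w) / w ^ 2 * (u2 / t2) ^ 2)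
  by (unfold w; field; lra).
assert (ln (cosh w) / t1 ^ 2 <= ln (cosh u1) / t1 ^ 2).
{ apply Rmult_le_compat_r; [| exact hcosh].
  left; apply Rinv_0_lt_compat, pow_lt; lra. }
pose proof (Rmult_lt_compat_r _ _ _ hk hdec).
lra.
Qed.

Lemma arcosh_pos y : 1 < y -> 0 < arcosh y.
Proof.
intro hy. unfold arcosh. rewrite <- ln_1.
apply ln_increasing; [lra |]. pose proof (sqrt_pos (y * y - 1)). lra.
Qed.

Lemma cosh_arcosh y : 1 <= y -> cosh (arcosh y) = y.
Proof.
intro hy. unfold arcosh, cosh.
set (s := sqrt (y * y - 1)).
assert (hs : s * s = y * y - 1) by (apply sqrt_sqrt; nra).
assert (0 <= s) by apply sqrt_pos.
rewrite exp_Ropp, exp_ln by lra.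
replace (/ (y + s)) with (y - s); [field |].
apply Rmult_eq_reg_l with (y + s); [rewrite Rinv_r; nra | lra].
Qed.

Lemma arcosh_cos_div_cos_div_increasing p c t1 t2 :
  0 < p < c -> 0 < t1 < t2 -> c * t2 < PI / 2 ->
  arcosh (cos (p * t1) / cos (c * t1)) / t1 <
  arcosh (cos (p * t2) / cos (c * t2)) / t2.
Proof.
intros hpc ht hct.
pose proof PI_RGT_0.
assert (hy : forall t, 0 < t <= t2 ->
  1 < cos (p * t) / cos (c * t) /\
  ln (cosh (arcosh (cos (p * t) / cos (c * t)))) =
  ln (cos (p * t)) - ln (cos (c * t))).
{ intros t h.
  assert (hc : 0 < cos (c * t)) by (apply cos_gt_0; nra).
  assert (hcp : cos (c * t) < cos (p * t)) by (apply cos_decreasing_1; nra).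
  assert (hy : 1 < cos (p * t) / cos (c * t)).
  { apply Rmult_lt_reg_r with (cos (c * t)); [lra |]. field_simplify; lra. }
  split; [exact hy |].
  rewrite cosh_arcosh, ln_div; lra. }
destruct (hy t1 ltac:(lra)) as [_ e1].
destruct (hy t2 ltac:(lra)) as [hy2 e2].
apply div_lt_of_ln_cosh_div_sqr_lt; [lra | apply arcosh_pos, hy2 |].
rewrite e1, e2. apply ln_cos_diff_div_sqr_increasing; lra.
Qed.

Lemma reg_perimeter_eq n A : (1 <= n)%nat ->
  reg_perimeter n A =
  2 * (arcosh (cos (PI * / INR n) / cos ((PI + A / 2) * / INR n)) / / INR n).
Proof.
intro hn. assert (0 < INR n) by (apply lt_0_INR; lia).
unfold reg_perimeter, reg_side, reg_angle.
replace (((INR n - 2) * PI - A) / INR n / 2)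
  with (PI / 2 - (PI + A / 2) * / INR n) by (field; lra).
rewrite sin_shift. change (PI / INR n) with (PI * / INR n). field. lra.
Qed.

Theorem proposition3p5 (A : R) (n : nat) :
  0 < A -> (3 <= n)%nat -> (INR n - 2) * PI > A ->
  reg_perimeter (S n) A < reg_perimeter n A.
Proof.
intros hA hn hnA.
assert (hn3 : 3 <= INR n)
  by (replace 3 with (INR 3) by (simpl; ring); apply le_INR; lia).
pose proof PI_RGT_0.
rewrite !reg_perimeter_eq, S_INR by lia.
apply Rmult_lt_compat_l; [lra |].
apply arcosh_cos_div_cos_div_increasing.
- lra.
- split; [apply Rinv_0_lt_compat | apply Rinv_lt_contravar]; nra.
- apply Rmult_lt_reg_r with (2 * INR n); [lra |].
  replace ((PI + A / 2) * / INR n * (2 * INR n)) with (2 * PI + A) by (field; lra).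
  nra.
Qed.
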